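(* Let $\mathcal{T}$ be a smooth manifold with local coordinates $(t^a)$ carrying a Riemannian metric $h_{ab}(t)$ (inverse $h^{ab}$) with Christoffel symbols $\chi^a_{bc}(t)$, and let $M$ be a smooth $n$-dimensional manifold with local coordinates $(x^i)$ carrying a semi-Riemannian metric $\varphi_{ij}(x)$ (inverse $\varphi^{ij}$) with Christoffel symbols $\gamma^k_{ij}(x)$. Let $m\neq0$, $c>0$, $e$ be real constants, $h^*_{ab}=(4mc)^{-1}h_{ab}$, and $A^{(a)}_{(i)}(t,x)$ a smooth d-tensor on $\mathcal{T}\times M$. On $E^*=J^{1*}(\mathcal{T},M)$ with coordinates $(t^a,x^i,p^a_i)$, let $\frac{\delta}{\delta t^a}=\frac{\partial}{\partial t^a}-\chi^f_{ag}p^g_r\frac{\partial}{\partial p^f_r}$, $\frac{\delta}{\delta x^i}=\frac{\partial}{\partial x^i}-\underset{2}{N}{}^{(f)}_{(r)i}\frac{\partial}{\partial p^f_r}$ with $\underset{2}{N}{}^{(f)}_{(r)i}=\gamma^s_{ri}\big[\frac{2e}{m}A^{(f)}_{(s)}-p^f_s\big]-\frac{e}{m}\big[\frac{\partial A^{(f)}_{(r)}}{\partial x^i}+\frac{\partial A^{(f)}_{(i)}}{\partial x^r}\big]$, and $\delta p^a_i=dp^a_i+\chi^a_{fg}p^g_i\,dt^f+\underset{2}{N}{}^{(a)}_{(i)r}dx^r$. Let \[ \mathbb{G}=h^*_{ab}\,dt^a\otimes dt^b+\varphi_{ij}\,dx^i\otimes dx^j+h^*_{ab}\varphi^{ij}\,\delta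 p^a_i\otimes\delta p^b_j . \] Let $D$ be the linear connection on $E^*$ defined on the adapted frame by $D_{\frac{\delta}{\delta t^c}}\frac{\delta}{\delta t^b}=\chi^a_{bc}\frac{\delta}{\delta t^a}$, $D_{\frac{\delta}{\delta t^c}}\frac{\delta}{\delta x^j}=0$, $D_{\frac{\delta}{\delta t^c}}\frac{\partial}{\partial p^f_j}=\chi^b_{fc}\frac{\partial}{\partial p^b_j}$, $D_{\frac{\delta}{\delta x^k}}\frac{\delta}{\delta t^b}=0$, $D_{\frac{\delta}{\delta x^k}}\frac{\delta}{\delta x^j}=\gamma^i_{jk}\frac{\delta}{\delta x^i}$, $D_{\frac{\delta}{\delta x^k}}\frac{\partial}{\partial p^b_s}=-\gamma^s_{ik}\frac{\partial}{\partial p^b_i}$, and $D_{\frac{\partial}{\partial p^c_k}}$ of every adapted frame vector equal to $0$; let $\mathrm{Ric}(Y,Z)=\mathrm{tr}(X\mapsto R(X,Y)Z)$ with $R(X,Y)Z=D_XD_YZ-D_YD_XZ-D_{[X,Y]}Z$, and let $\mathrm{Sc}$ be the trace of $\mathrm{Ric}$ with respect to $\mathbb{G}$. Then \[ \mathrm{Sc}=(4mc)\,\chi+\mathfrak{R}, \] where $\chi=h^{ab}\chi_{ab}$ and $\mathfrak{R}=\varphi^{ij}\mathfrak{R}_{ij}$ are the classical scalar curvatures of $h_{ab}$ and $\varphi_{ij}$ ($\chi_{ab}$, $\mathfrak{R}_{ij}$ being their Ricci tensors).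
   Context: Indices $a,b,c,d,f,g$ run from $1$ to $\dim\mathcal{T}$, indices $i,j,k,r,s$ from $1$ to $n$; Einstein summation convention. The fibre coordinates of $J^{1*}(\mathcal{T},M)$ transform as $\tilde p^a_i=\frac{\partial \tilde t^a}{\partial t^b}\frac{\partial x^j}{\partial \tilde x^i}p^b_j$. The connection $D$ is what the paper calls the generalized Cartan canonical connection $C\Gamma$ of the autonomous multi-time Hamilton space of electrodynamics, and $\mathbb{G}$ its polymomentum gravitational $h^*$-potential. *)

(* Local-coordinate formalization on the chart
   R^p x R^n x R^(p*n) of E* = J^{1*}(T,M). *)
From HB Require Import structures.
From mathcomp Require Import all_boot all_order all_algebra.
From mathcomp Require Import all_classical all_reals all_analysis.
Set Implicit Arguments. Unset Strict Implicit. Unset Printing Implicit Defensive.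
Import Order.TTheory GRing.Theory Num.Theory.
Import numFieldNormedType.Exports.
Local Open Scope ring_scope.

Definition partial {R : realType} {k : nat} (i : 'I_k) (f : 'rV[R]_k -> R)
  (x : 'rV[R]_k) : R := 'D_(delta_mx ord0 i) f x.

Fixpoint Ck {R : realType} {k : nat} (d : nat) (f : 'rV[R]_k -> R) : Prop :=
  match d with
  | O => continuous f
  | d'.+1 => (forall x, differentiable f x) /\ forall i, Ck d' (partial i f)
  end.
Definition smooth {R : realType} {k : nat} (f : 'rV[R]_k -> R) : Prop :=
  forall d, Ck d f.

Definition christoffel {R : realType} {k : nat} (g : 'rV[R]_k -> 'M[R]_k)
  (a b c : 'I_k) (x : 'rV[R]_k) : R :=
  2^-1 * \sum_(d < k) invmx (g x) a d *
    (partial b (fun y => g y d c) x + partial c (fun y => g y d b) x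
     - partial d (fun y => g y b c) x).

(* Ricci tensor Ric_{jk} = tr (X |-> R(X,d_j) d_k) of the Levi-Civita
   connection, R(X,Y)Z = D_X D_Y Z - D_Y D_X Z - D_[X,Y] Z,
   D_{d_j} d_k = Gamma^l_{kj} d_l *)
Definition ricci {R : realType} {k : nat} (g : 'rV[R]_k -> 'M[R]_k)
  (j l : 'I_k) (x : 'rV[R]_k) : R :=
  \sum_(i < k)
    (partial i (fun y => christoffel g i l j y) x
     - partial j (fun y => christoffel g i l i y) x
     + \sum_(q < k) (christoffel g q l j x * christoffel g i q i x
                     - christoffel g q l i x * christoffel g i q j x)).

Definition scalar_curv {R : realType} {k : nat} (g : 'rV[R]_k -> 'M[R]_k)
  (x : 'rV[R]_k) : R :=
  \sum_(j < k) \sum_(l < k) invmx (g x) j l * ricci g j l x.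

Definition Ndim (p n : nat) : nat := (p + (n + p * n))%N.

Definition tidx {p n : nat} (a : 'I_p) : 'I_(Ndim p n) := lshift (n + p * n) a.
Definition xidx {p n : nat} (i : 'I_n) : 'I_(Ndim p n) :=
  rshift p (lshift (p * n) i).
Definition pidx {p n : nat} (a : 'I_p) (i : 'I_n) : 'I_(Ndim p n) :=
  rshift p (rshift n (mxvec_index a i)).

Definition tpart {R : realType} {p n : nat} (z : 'rV[R]_(Ndim p n)) : 'rV[R]_p :=
  \row_a z ord0 (@tidx p n a).
Definition xpart {R : realType} {p n : nat} (z : 'rV[R]_(Ndim p n)) : 'rV[R]_n :=
  \row_i z ord0 (@xidx p n i).
Definition pc {R : realType} {p n : nat} (z : 'rV[R]_(Ndim p n)) (a : 'I_p)
  (i : 'I_n) : R := z ord0 (@pidx p n a i).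

Definition ebasis {R : realType} {N : nat} (k : 'I_N) : 'rV[R]_N :=
  delta_mx ord0 k.


Definition chiE {R : realType} {p n : nat} (h : 'rV[R]_p -> 'M[R]_p)
  (a b c : 'I_p) (z : 'rV[R]_(Ndim p n)) : R := christoffel h a b c (tpart z).
Definition gamE {R : realType} {p n : nat} (phi : 'rV[R]_n -> 'M[R]_n)
  (i j k : 'I_n) (z : 'rV[R]_(Ndim p n)) : R := christoffel phi i j k (xpart z).

Definition AE {R : realType} {p n : nat} (A : 'rV[R]_p -> 'rV[R]_n -> 'M[R]_(p, n))
  (f : 'I_p) (r : 'I_n) (z : 'rV[R]_(Ndim p n)) : R := A (tpart z) (xpart z) f r.
Definition dAE {R : realType} {p n : nat} (A : 'rV[R]_p -> 'rV[R]_n -> 'M[R]_(p, n))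
  (f : 'I_p) (r i : 'I_n) (z : 'rV[R]_(Ndim p n)) : R :=
  partial i (fun y => A (tpart z) y f r) (xpart z).

Definition N2 {R : realType} {p n : nat} (phi : 'rV[R]_n -> 'M[R]_n)
  (A : 'rV[R]_p -> 'rV[R]_n -> 'M[R]_(p, n)) (m e : R)
  (f : 'I_p) (r i : 'I_n) (z : 'rV[R]_(Ndim p n)) : R :=
  \sum_(s < n) gamE phi s r i z * (2 * e / m * AE A f s z - pc z f s)
  - e / m * (dAE A f r i z + dAE A f i r z).

(* adapted frame, indexed like the coordinates:
   tidx a |-> delta/delta t^a, xidx i |-> delta/delta x^i,
   pidx a i |-> d/d p^a_i ; given by components in the coordinate basis *)
Definition frame {R : realType} {p n : nat} (h : 'rV[R]_p -> 'M[R]_p)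
  (phi : 'rV[R]_n -> 'M[R]_n) (A : 'rV[R]_p -> 'rV[R]_n -> 'M[R]_(p, n))
  (m e : R) (al : 'I_(Ndim p n)) (z : 'rV[R]_(Ndim p n)) : 'rV[R]_(Ndim p n) :=
  \sum_(a < p) (al == tidx a)%:R *:
     (ebasis (tidx a) - \sum_(f < p) \sum_(g < p) \sum_(r < n)
        (chiE h f a g z * pc z g r) *: ebasis (pidx f r))
  + \sum_(i < n) (al == xidx i)%:R *:
     (ebasis (xidx i) - \sum_(f < p) \sum_(r < n)
        N2 phi A m e f r i z *: ebasis (pidx f r))
  + \sum_(a < p) \sum_(i < n) (al == pidx a i)%:R *: ebasis (pidx a i).

(* dual coframe (dt^a, dx^i, delta p^a_i) evaluated on a coordinate vector v *)
Definition coframe {R : realType} {p n : nat} (h : 'rV[R]_p -> 'M[R]_p)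
  (phi : 'rV[R]_n -> 'M[R]_n) (A : 'rV[R]_p -> 'rV[R]_n -> 'M[R]_(p, n))
  (m e : R) (al : 'I_(Ndim p n)) (z : 'rV[R]_(Ndim p n))
  (v : 'rV[R]_(Ndim p n)) : R :=
  \sum_(a < p) (al == tidx a)%:R * v ord0 (tidx a)
  + \sum_(i < n) (al == xidx i)%:R * v ord0 (xidx i)
  + \sum_(a < p) \sum_(i < n) (al == pidx a i)%:R *
      (v ord0 (pidx a i)
       + \sum_(f < p) \sum_(g < p) chiE h a f g z * pc z g i * v ord0 (tidx f)
       + \sum_(r < n) N2 phi A m e a i r z * v ord0 (xidx r)).

(* connection coefficients of D in the adapted frame:
   D_{e_be} e_ga = sum_al conn be ga al *: e_al *)
Definition conn {R : realType} {p n : nat} (h : 'rV[R]_p -> 'M[R]_p)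
  (phi : 'rV[R]_n -> 'M[R]_n) (be ga al : 'I_(Ndim p n))
  (z : 'rV[R]_(Ndim p n)) : R :=
  \sum_(c < p) \sum_(b < p) \sum_(a < p)
     [&& be == tidx c, ga == tidx b & al == tidx a]%:R * chiE h a b c z
  + \sum_(c < p) \sum_(f < p) \sum_(j < n) \sum_(b < p)
     [&& be == tidx c, ga == pidx f j & al == pidx b j]%:R * chiE h b f c z
  + \sum_(k < n) \sum_(j < n) \sum_(i < n)
     [&& be == xidx k, ga == xidx j & al == xidx i]%:R * gamE phi i j k z
  + \sum_(k < n) \sum_(b < p) \sum_(s < n) \sum_(i < n)
     [&& be == xidx k, ga == pidx b s & al == pidx b i]%:R * (- gamE phi s i k z).
  (* all other coefficients, in particular all D_{d/dp^c_k}, vanish *)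

(* vector fields on the chart: maps z |-> coordinate components *)
Definition vfield (R : realType) (N : nat) := 'rV[R]_N -> 'rV[R]_N.

Definition dalong {R : realType} {N : nat} (X : vfield R N) (f : 'rV[R]_N -> R)
  (z : 'rV[R]_N) : R := 'D_(X z) f z.

Definition lie {R : realType} {N : nat} (X Y : vfield R N) : vfield R N :=
  fun z => \row_k (dalong X (fun w => Y w ord0 k) z - dalong Y (fun w => X w ord0 k) z).

(* the linear connection D, extended from the frame by linearity and Leibniz *)
Definition covD {R : realType} {p n : nat} (h : 'rV[R]_p -> 'M[R]_p)
  (phi : 'rV[R]_n -> 'M[R]_n) (A : 'rV[R]_p -> 'rV[R]_n -> 'M[R]_(p, n))
  (m e : R) (X Y : vfield R (Ndim p n)) : vfield R (Ndim p n) :=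
  fun z => \sum_(al < Ndim p n)
    (dalong X (fun w => coframe h phi A m e al w (Y w)) z
     + \sum_(be < Ndim p n) \sum_(ga < Ndim p n)
         coframe h phi A m e be z (X z) * coframe h phi A m e ga z (Y z)
         * conn h phi be ga al z) *: frame h phi A m e al z.

Definition curv {R : realType} {p n : nat} (h : 'rV[R]_p -> 'M[R]_p)
  (phi : 'rV[R]_n -> 'M[R]_n) (A : 'rV[R]_p -> 'rV[R]_n -> 'M[R]_(p, n))
  (m e : R) (X Y Z : vfield R (Ndim p n)) : vfield R (Ndim p n) :=
  fun z => covD h phi A m e X (covD h phi A m e Y Z) z
         - covD h phi A m e Y (covD h phi A m e X Z) z
         - covD h phi A m e (lie X Y) Z z.

Definition ricD {R : realType} {p n : nat} (h : 'rV[R]_p -> 'M[R]_p)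
  (phi : 'rV[R]_n -> 'M[R]_n) (A : 'rV[R]_p -> 'rV[R]_n -> 'M[R]_(p, n))
  (m e : R) (Y Z : vfield R (Ndim p n)) (z : 'rV[R]_(Ndim p n)) : R :=
  \sum_(al < Ndim p n) coframe h phi A m e al z
     (curv h phi A m e (frame h phi A m e al) Y Z z).

Definition Gmet {R : realType} {p n : nat} (h : 'rV[R]_p -> 'M[R]_p)
  (phi : 'rV[R]_n -> 'M[R]_n) (A : 'rV[R]_p -> 'rV[R]_n -> 'M[R]_(p, n))
  (m c e : R) (z v w : 'rV[R]_(Ndim p n)) : R :=
  let hs a b := (4 * m * c)^-1 * h (tpart z) a b in
  \sum_(a < p) \sum_(b < p) hs a b * v ord0 (tidx a) * w ord0 (tidx b)
  + \sum_(i < n) \sum_(j < n) phi (xpart z) i j * v ord0 (xidx i) * w ord0 (xidx j)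
  + \sum_(a < p) \sum_(b < p) \sum_(i < n) \sum_(j < n)
      hs a b * invmx (phi (xpart z)) i j
      * coframe h phi A m e (pidx a i) z v * coframe h phi A m e (pidx b j) z w.

Definition scD {R : realType} {p n : nat} (h : 'rV[R]_p -> 'M[R]_p)
  (phi : 'rV[R]_n -> 'M[R]_n) (A : 'rV[R]_p -> 'rV[R]_n -> 'M[R]_(p, n))
  (m c e : R) (z : 'rV[R]_(Ndim p n)) : R :=
  let Gf := \matrix_(al, be) Gmet h phi A m c e z (frame h phi A m e al z)
                                              (frame h phi A m e be z) in
  \sum_(al < Ndim p n) \sum_(be < Ndim p n)
     invmx Gf al be * ricD h phi A m e (frame h phi A m e al) (frame h phi A m e be) z.

(* In the adapted frame (delta/delta t^a, delta/delta x^i, d/dp^a_i) and its dual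
   coframe (dt^a, dx^i, delta p^a_i), the coefficients of D on the t-block and on
   the x-block are the Christoffel symbols of h and of phi, D_{d/dp} = 0, and all
   coefficients depend on (t, x) only.  Brackets of adapted fields are vertical,
   so the D_[X,Y] term of the curvature drops out.  Consequently Ric,
   evaluated on the frame, is the Ricci tensor of h on the t-block, that of phi
   on the x-block, and vanishes on the p-block.  The frame matrix of G is block
   diagonal, diag(h/4mc, phi, h/4mc (x) phi^-1), with inverse
   diag(4mc h^-1, phi^-1, 4mc h^-1 (x) phi); the mixed blocks of Ric are never
   paired with a nonzero entry, and the contraction is 4mc chi + R. *)

From HB Require Import structures.
From mathcomp Require Import all_boot all_order all_algebra.
From mathcomp Require Import all_classical all_reals all_analysis.
From mathcomp Require Import zify.
Import Order.TTheory GRing.Theory Num.Theory.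
Local Open Scope ring_scope.
Set Implicit Arguments. Unset Strict Implicit. Unset Printing Implicit Defensive.

Lemma big_ord_only (V : nmodType) k (j : 'I_k) (F : 'I_k -> V) :
  (forall c, c != j -> F c = 0) -> \sum_c F c = F j.
Proof. by move=> F0; rewrite (bigD1 j) //= big1 ?addr0. Qed.
Arguments big_ord_only {V k} j {F}.

Section ScalarForms.
Variables (R : comPzRingType) (U : lmodType R).

Lemma scalarD (f g : U -> R) : scalar f -> scalar g -> scalar (fun u => f u + g u).
Proof. by move=> Lf Lg a u v; rewrite Lf Lg mulrDr addrACA. Qed.

Lemma scalarMl (c : R) (f : U -> R) : scalar f -> scalar (fun u => c * f u).
Proof. by move=> Lf a u v; rewrite Lf mulrDr mulrCA. Qed.

Lemma scalar_sum k (F : 'I_k -> U -> R) :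
  (forall i, scalar (F i)) -> scalar (fun u => \sum_i F i u).
Proof.
move=> LF a u v; rewrite mulr_sumr -big_split /=.
by apply: eq_bigr => i _; rewrite LF.
Qed.

End ScalarForms.

Lemma scalar_entry (R : comPzRingType) k (q : 'I_k) : scalar (fun v : 'rV[R]_k => v ord0 q).
Proof. by move=> a u v; rewrite !mxE. Qed.

Section DirectionalDerivatives.
Variables (R : numFieldType) (U V W : normedModType R).

Lemma derive_comp_linear (L : {linear U -> V}) (f : V -> W) (a v : U) :
  'D_v (f \o L) a = 'D_(L v) f (L a).
Proof. by rewrite /derive; do 2 f_equal; apply: funext => s /=; rewrite linearP. Qed.

Lemma derive_cst_along (f : U -> W) (a v : U) :
  (forall s : R, f (s *: v + a) = f a) -> 'D_v f a = 0.
Proof.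
move=> fv; rewrite -(derive_cst (f a) a v) /derive.
by do 2 f_equal; apply: funext => s /=; rewrite fv.
Qed.

End DirectionalDerivatives.

Lemma posdef_unitmx (R : realFieldType) k (M : 'M[R]_k) :
  (forall v : 'rV[R]_k, v != 0 -> 0 < (v *m M *m v^T) ord0 ord0) -> M \in unitmx.
Proof.
move=> M_pd; rewrite unitmxE unitfE; apply/negP => /det0P [v v0 vM].
by have := M_pd v v0; rewrite vM mul0mx mxE ltxx.
Qed.

Section Indices.
Variables p n : nat.
Local Notation N := (Ndim p n).

Lemma eq_tidx (a b : 'I_p) : (@tidx p n a == tidx b) = (a == b).
Proof. exact/inj_eq/lshift_inj. Qed.

Lemma eq_xidx (i j : 'I_n) : (@xidx p n i == xidx j) = (i == j).
Proof. by rewrite /xidx (inj_eq (@rshift_inj _ _)) (inj_eq (@lshift_inj _ _)). Qed.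

Lemma mxvec_index_inj : injective (fun ai : 'I_p * 'I_n => mxvec_index ai.1 ai.2).
Proof.
have [g K _] := @curry_mxvec_bij p n.
by move=> [a i] [b j] /= E; rewrite -(K (a, i)) // -(K (b, j)) //= E.
Qed.

Lemma eq_pidx (a b : 'I_p) (i j : 'I_n) :
  (@pidx p n a i == pidx b j) = (a == b) && (i == j).
Proof.
rewrite /pidx !(inj_eq (@rshift_inj _ _)) -xpair_eqE.
exact: (inj_eq mxvec_index_inj (a, i) (b, j)).
Qed.

Lemma tidx_eq_xidx (a : 'I_p) (i : 'I_n) : (@tidx p n a == xidx i) = false.
Proof. by apply/negbTE/eqP => /(congr1 val) /=; have := ltn_ord a; lia. Qed.

Lemma tidx_eq_pidx (a b : 'I_p) (i : 'I_n) : (@tidx p n a == pidx b i) = false.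
Proof. by apply/negbTE/eqP => /(congr1 val) /=; have := ltn_ord a; lia. Qed.

Lemma xidx_eq_pidx (j : 'I_n) (b : 'I_p) (i : 'I_n) : (@xidx p n j == pidx b i) = false.
Proof. by apply/negbTE/eqP => /(congr1 val) /=; have := ltn_ord j; lia. Qed.

Lemma xidx_eq_tidx (a : 'I_p) (i : 'I_n) : (@xidx p n i == tidx a) = false.
Proof. by rewrite eq_sym tidx_eq_xidx. Qed.

Lemma pidx_eq_tidx (a b : 'I_p) (i : 'I_n) : (@pidx p n b i == tidx a) = false.
Proof. by rewrite eq_sym tidx_eq_pidx. Qed.

Lemma pidx_eq_xidx (j : 'I_n) (b : 'I_p) (i : 'I_n) : (@pidx p n b i == xidx j) = false.
Proof. by rewrite eq_sym xidx_eq_pidx. Qed.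

Variant idx_spec : 'I_N -> Type :=
  | IdxT a : idx_spec (tidx a)
  | IdxX i : idx_spec (xidx i)
  | IdxP a i : idx_spec (pidx a i).

Lemma idxP al : idx_spec al.
Proof.
case: (split_ordP al) => [a ->|k ->]; first exact: IdxT.
case: (split_ordP k) => [i ->|q ->]; first exact: (IdxX i).
by case/mxvec_indexP: q => a i; exact: (IdxP a i).
Qed.

Lemma sum_idx (V : nmodType) (F : 'I_N -> V) :
  \sum_al F al = \sum_a F (tidx a) + \sum_i F (xidx i) + \sum_a \sum_i F (pidx a i).
Proof.
rewrite big_split_ord /= big_split_ord /= addrA pair_big /=.
congr (_ + _ + _); rewrite (reindex (uncurry (@mxvec_index p n))) /=.
  by apply: eq_bigr => -[a i].
have [g K1 K2] := @curry_mxvec_bij p n.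
by exists g => x _; [exact: K1 | exact: K2].
Qed.

Lemma sum_idx_tidx (V : nmodType) (F : 'I_N -> V) : (forall i, F (xidx i) = 0) ->
  (forall a i, F (pidx a i) = 0) -> \sum_g F g = \sum_a F (tidx a).
Proof.
move=> Fx Fp; rewrite sum_idx [X in _ + X + _]big1 // [X in _ + X]big1 ?addr0 //.
by move=> a _; rewrite big1.
Qed.

Lemma sum_idx_xidx (V : nmodType) (F : 'I_N -> V) : (forall a, F (tidx a) = 0) ->
  (forall a i, F (pidx a i) = 0) -> \sum_g F g = \sum_i F (xidx i).
Proof.
move=> Ft Fp; rewrite sum_idx [X in X + _ + _]big1 // [X in _ + X]big1 ?add0r ?addr0 //.
by move=> a _; rewrite big1.
Qed.

End Indices.

(* Unfolded, [frame], [coframe], [conn] and [adapted_blockmx] are sums of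
   indicator terms [(al == tidx a)%:R * _].  [drop_vanishing_sums] deletes every
   sum whose indicators all evaluate to 0, and [collapse_at j] keeps only the
   [j]-th term of a sum. *)
Ltac idx_simpl :=
  rewrite ?eq_tidx ?eq_xidx ?eq_pidx ?tidx_eq_xidx ?tidx_eq_pidx ?xidx_eq_pidx
    ?xidx_eq_tidx ?pidx_eq_tidx ?pidx_eq_xidx ?eqxx ?andTb ?andbT ?andbF ?andFb /=
    ?(mul0r, mulr0, mul1r, mulr1, scale0r, scale1r, addr0, add0r, subr0, sub0r, oppr0).

Ltac vanish :=
  repeat first [move=> ? _ | apply: big1 | progress rewrite /ebasis ?summxE ?mxE]; idx_simpl.

Ltac drop_vanishing_sums :=
  repeat match goal with
  | |- context [bigop.body ?z ?r ?F] => rewrite [bigop.body z r F]big1; last by vanish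
  end; rewrite ?addr0 ?add0r.

Ltac vanish_off_diagonal :=
  let ne := fresh "ne" in let ne' := fresh "ne" in
  move=> ? /negbTE ne; have ne' := ne; rewrite eq_sym in ne';
  vanish; rewrite ?ne ?ne'; idx_simpl.

Ltac collapse_at j := rewrite (big_ord_only j); last by vanish_off_diagonal.

Section ConnectionCoefficients.
Variables (R : realType) (p n : nat) (h : 'rV[R]_p -> 'M[R]_p) (phi : 'rV[R]_n -> 'M[R]_n).
Local Notation K := (conn h phi).

Lemma conn_ttt c b a z : K (tidx c) (tidx b) (tidx a) z = chiE h a b c z.
Proof.
by rewrite /conn; drop_vanishing_sums; collapse_at c; collapse_at b; collapse_at a; idx_simpl.
Qed.

Lemma conn_ttx c b i z : K (tidx c) (tidx b) (xidx i) z = 0.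
Proof. by rewrite /conn; drop_vanishing_sums. Qed.

Lemma conn_ttp c b a i z : K (tidx c) (tidx b) (pidx a i) z = 0.
Proof. by rewrite /conn; drop_vanishing_sums. Qed.

Lemma conn_tx c j al z : K (tidx c) (xidx j) al z = 0.
Proof. by rewrite /conn; drop_vanishing_sums. Qed.

Lemma conn_xxx k j i z : K (xidx k) (xidx j) (xidx i) z = gamE phi i j k z.
Proof.
by rewrite /conn; drop_vanishing_sums; collapse_at k; collapse_at j; collapse_at i; idx_simpl.
Qed.

Lemma conn_xxt k j a z : K (xidx k) (xidx j) (tidx a) z = 0.
Proof. by rewrite /conn; drop_vanishing_sums. Qed.

Lemma conn_xxp k j a i z : K (xidx k) (xidx j) (pidx a i) z = 0.
Proof. by rewrite /conn; drop_vanishing_sums. Qed.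

Lemma conn_xt k b al z : K (xidx k) (tidx b) al z = 0.
Proof. by rewrite /conn; drop_vanishing_sums. Qed.

Lemma conn_p a i ga al z : K (pidx a i) ga al z = 0.
Proof. by rewrite /conn; drop_vanishing_sums. Qed.

End ConnectionCoefficients.

Section AdaptedFrame.
Variables (R : realType) (p n : nat) (h : 'rV[R]_p -> 'M[R]_p) (phi : 'rV[R]_n -> 'M[R]_n)
  (A : 'rV[R]_p -> 'rV[R]_n -> 'M[R]_(p, n)) (m e : R).
Local Notation N := (Ndim p n).
Local Notation Fr := (frame h phi A m e).
Local Notation Cf := (coframe h phi A m e).

Lemma frame_tidx a z : Fr (tidx a) z =
  ebasis (tidx a)
  - \sum_(f < p) \sum_(g < p) \sum_(r < n) (chiE h f a g z * pc z g r) *: ebasis (pidx f r).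
Proof. by rewrite /frame; drop_vanishing_sums; collapse_at a; idx_simpl. Qed.

Lemma frame_xidx i z : Fr (xidx i) z =
  ebasis (xidx i) - \sum_(f < p) \sum_(r < n) N2 phi A m e f r i z *: ebasis (pidx f r).
Proof. by rewrite /frame; drop_vanishing_sums; collapse_at i; idx_simpl. Qed.

Lemma frame_pidx a i z : Fr (pidx a i) z = ebasis (pidx a i).
Proof. by rewrite /frame; drop_vanishing_sums; collapse_at a; collapse_at i; idx_simpl. Qed.

Lemma coframe_tidx c z v : Cf (tidx c) z v = v ord0 (tidx c).
Proof. by rewrite /coframe; drop_vanishing_sums; collapse_at c; idx_simpl. Qed.

Lemma coframe_xidx k z v : Cf (xidx k) z v = v ord0 (xidx k).
Proof. by rewrite /coframe; drop_vanishing_sums; collapse_at k; idx_simpl. Qed.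

Lemma coframe_pidx b j z v : Cf (pidx b j) z v =
  v ord0 (pidx b j)
  + \sum_(f < p) \sum_(g < p) chiE h b f g z * pc z g j * v ord0 (tidx f)
  + \sum_(r < n) N2 phi A m e b j r z * v ord0 (xidx r).
Proof. by rewrite /coframe; drop_vanishing_sums; collapse_at b; collapse_at j; idx_simpl. Qed.

Lemma coframe_is_scalar al z : scalar (Cf al z).
Proof.
by rewrite /coframe; repeat first [ apply: (@scalarD R) | apply: (@scalar_sum R) => ?
  | apply: (@scalarMl R) | apply: (@scalar_entry R) ].
Qed.

HB.instance Definition _ al z :=
  GRing.isLinear.Build R 'rV[R]_N R *%R (Cf al z) (coframe_is_scalar al z).

Lemma frame_entry_tidx al z c : Fr al z ord0 (tidx c) = (al == tidx c)%:R.
Proof.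
case: (idxP al) => [a|i|a i]; rewrite ?frame_tidx ?frame_xidx ?frame_pidx !mxE ?summxE;
  by drop_vanishing_sums; idx_simpl; rewrite 1?eq_sym.
Qed.

Lemma frame_entry_xidx al z k : Fr al z ord0 (xidx k) = (al == xidx k)%:R.
Proof.
case: (idxP al) => [a|i|a i]; rewrite ?frame_tidx ?frame_xidx ?frame_pidx !mxE ?summxE;
  by drop_vanishing_sums; idx_simpl; rewrite 1?eq_sym.
Qed.

Lemma frame_tidx_entry_pidx a z b j :
  Fr (tidx a) z ord0 (pidx b j) = - \sum_(g < p) chiE h b a g z * pc z g j.
Proof.
rewrite frame_tidx !mxE summxE; idx_simpl; congr (- _).
collapse_at b; rewrite summxE; apply: eq_bigr => g _.
by rewrite summxE; collapse_at j; rewrite /ebasis !mxE; idx_simpl.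
Qed.

Lemma frame_xidx_entry_pidx i z b j : Fr (xidx i) z ord0 (pidx b j) = - N2 phi A m e b j i z.
Proof.
rewrite frame_xidx !mxE summxE; idx_simpl; congr (- _).
by collapse_at b; rewrite summxE; collapse_at j; rewrite /ebasis !mxE; idx_simpl.
Qed.

Lemma coframe_frame be al z : Cf be z (Fr al z) = (be == al)%:R.
Proof.
case: (idxP be) => [c|k|b j].
- by rewrite coframe_tidx frame_entry_tidx eq_sym.
- by rewrite coframe_xidx frame_entry_xidx eq_sym.
rewrite coframe_pidx.
under eq_bigr do under eq_bigr do rewrite frame_entry_tidx.
under [X in _ + X]eq_bigr do rewrite frame_entry_xidx.
case: (idxP al) => [a|i|a i].
- rewrite frame_tidx_entry_pidx; drop_vanishing_sums.
  rewrite [X in _ + X](big_ord_only a); last by vanish_off_diagonal.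
  by idx_simpl; under [X in _ + X]eq_bigr do rewrite mulr1; rewrite addNr.
- rewrite frame_xidx_entry_pidx; drop_vanishing_sums.
  by rewrite [X in _ + X](big_ord_only i); [idx_simpl; rewrite addNr | vanish_off_diagonal].
- by rewrite frame_pidx /ebasis !mxE; drop_vanishing_sums; idx_simpl; rewrite eq_sym.
Qed.

End AdaptedFrame.

Section BaseProjections.
Variables (R : realType) (p n : nat).
Local Notation N := (Ndim p n).

Lemma tpart_is_linear : linear (@tpart R p n).
Proof. by move=> s v w; apply/rowP => a; rewrite !mxE. Qed.

HB.instance Definition _ :=
  GRing.isLinear.Build R 'rV[R]_N 'rV[R]_p *:%R (@tpart R p n) tpart_is_linear.

Lemma xpart_is_linear : linear (@xpart R p n).
Proof. by move=> s v w; apply/rowP => i; rewrite !mxE. Qed.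

HB.instance Definition _ :=
  GRing.isLinear.Build R 'rV[R]_N 'rV[R]_n *:%R (@xpart R p n) xpart_is_linear.

End BaseProjections.

Section CovariantDerivative.
Variables (R : realType) (p n : nat) (h : 'rV[R]_p -> 'M[R]_p) (phi : 'rV[R]_n -> 'M[R]_n)
  (A : 'rV[R]_p -> 'rV[R]_n -> 'M[R]_(p, n)) (m e : R).
Local Notation N := (Ndim p n).
Local Notation Fr := (frame h phi A m e).
Local Notation Cf := (coframe h phi A m e).
Local Notation K := (conn h phi).
Local Notation cD := (covD h phi A m e).

Lemma sum_coframe_frame (c : 'I_N) z (F : 'I_N -> R) : \sum_be Cf be z (Fr c z) * F be = F c.
Proof.
rewrite (big_ord_only c) ?coframe_frame ?eqxx ?mul1r // => be /negPf be_c.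
by rewrite coframe_frame be_c mul0r.
Qed.

Lemma coframe_sum_frame (k : 'I_N -> R) al z : Cf al z (\sum_be k be *: Fr be z) = k al.
Proof.
rewrite linear_sum (big_ord_only al) /= ?linearZ /= ?coframe_frame ?eqxx ?mulr1 //.
by move=> be /negPf be_al; rewrite linearZ /= coframe_frame eq_sym be_al mulr0.
Qed.

Lemma covD_frame (X : vfield R N) ga z :
  cD X (Fr ga) z = \sum_al (\sum_be Cf be z (X z) * K be ga al z) *: Fr al z.
Proof.
rewrite /covD; apply: eq_bigr => al _; congr (_ *: _).
have -> : (fun w => Cf al w (Fr ga w)) = cst (al == ga)%:R.
  by apply: funext => w; rewrite coframe_frame.
rewrite /dalong derive_cst add0r; apply: eq_bigr => be _.
by under eq_bigr do rewrite mulrAC mulrC; rewrite sum_coframe_frame mulrC.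
Qed.

Lemma covD_frame_frame a b : cD (Fr a) (Fr b) = fun z => \sum_al K a b al z *: Fr al z.
Proof. by apply: funext => z; rewrite covD_frame; under eq_bigr do rewrite sum_coframe_frame. Qed.

Lemma covD_sum_frame (X : vfield R N) (k : 'I_N -> 'rV[R]_N -> R) z :
  cD X (fun w => \sum_al k al w *: Fr al w) z =
  \sum_al (dalong X (k al) z + \sum_be \sum_ga Cf be z (X z) * k ga z * K be ga al z)
     *: Fr al z.
Proof.
rewrite /covD; apply: eq_bigr => al _; congr ((_ + _) *: _).
  by congr dalong; apply: funext => w; rewrite coframe_sum_frame.
by apply: eq_bigr => be _; apply: eq_bigr => ga _; rewrite coframe_sum_frame.
Qed.

Lemma ricD_frame a b z : ricD h phi A m e (Fr a) (Fr b) z =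
  \sum_c (dalong (Fr c) (K a b c) z + \sum_g K a b g z * K c g c z
          - (dalong (Fr a) (K c b c) z + \sum_g K c b g z * K a g c z)
          - \sum_be Cf be z (lie (Fr c) (Fr a) z) * K be b c z).
Proof.
rewrite /ricD; apply: eq_bigr => c _.
rewrite /curv !covD_frame_frame !covD_sum_frame covD_frame !linearB /= !coframe_sum_frame.
by congr (_ + _ - (_ + _) - _); rewrite exchange_big /=; apply: eq_bigr => g _;
  under eq_bigr do rewrite -mulrA; rewrite sum_coframe_frame.
Qed.

End CovariantDerivative.

Section FrameRicci.
Variables (R : realType) (p n : nat) (h : 'rV[R]_p -> 'M[R]_p) (phi : 'rV[R]_n -> 'M[R]_n)
  (A : 'rV[R]_p -> 'rV[R]_n -> 'M[R]_(p, n)) (m e : R).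
Local Notation N := (Ndim p n).
Local Notation Fr := (frame h phi A m e).
Local Notation Cf := (coframe h phi A m e).
Local Notation K := (conn h phi).

(* The tidx and xidx components of every adapted frame field are constant,
   so brackets of adapted frame fields are vertical. *)
Lemma lie_frame_tidx c a z q : lie (Fr c) (Fr a) z ord0 (tidx q) = 0.
Proof.
have cst_t b : (fun w => Fr b w ord0 (tidx q)) = cst (b == tidx q)%:R.
  by apply: funext => w; rewrite frame_entry_tidx.
by rewrite mxE /dalong !cst_t !derive_cst subrr.
Qed.

Lemma lie_frame_xidx c a z q : lie (Fr c) (Fr a) z ord0 (xidx q) = 0.
Proof.
have cst_x b : (fun w => Fr b w ord0 (xidx q)) = cst (b == xidx q)%:R.
  by apply: funext => w; rewrite frame_entry_xidx.
by rewrite mxE /dalong !cst_x !derive_cst subrr.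
Qed.

Lemma sum_coframe_lie_conn a b c z : \sum_be Cf be z (lie (Fr c) (Fr a) z) * K be b c z = 0.
Proof.
apply: big1 => be _; case: (idxP be) => [q|q|q i].
- by rewrite coframe_tidx lie_frame_tidx mul0r.
- by rewrite coframe_xidx lie_frame_xidx mul0r.
- by rewrite conn_p mulr0.
Qed.

Lemma dalong_zero (X : vfield R N) (f : 'rV[R]_N -> R) z : (forall w, f w = 0) -> dalong X f z = 0.
Proof. by move=> f0; rewrite /dalong (funext f0); exact: derive_cst. Qed.

Lemma tpart_frame_tidx i z : tpart (Fr (tidx i) z) = delta_mx ord0 i.
Proof. by apply/rowP => a; rewrite mxE frame_entry_tidx mxE eq_tidx eq_sym. Qed.

Lemma xpart_frame_xidx i z : xpart (Fr (xidx i) z) = delta_mx ord0 i.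
Proof. by apply/rowP => a; rewrite mxE frame_entry_xidx mxE eq_xidx eq_sym. Qed.

Lemma dalong_frame_chiE i a b c z :
  dalong (Fr (tidx i)) (chiE h a b c) z = partial i (christoffel h a b c) (tpart z).
Proof. by rewrite /partial -(tpart_frame_tidx i z); exact: derive_comp_linear. Qed.

Lemma dalong_frame_gamE i a b c z :
  dalong (Fr (xidx i)) (gamE phi a b c) z = partial i (christoffel phi a b c) (xpart z).
Proof. by rewrite /partial -(xpart_frame_xidx i z); exact: derive_comp_linear. Qed.

Ltac conn_zero :=
  rewrite ?conn_ttx ?conn_ttp ?conn_tx ?conn_xxt ?conn_xxp ?conn_xt ?conn_p ?mulr0 ?mul0r.

Lemma ricD_tt j l z : ricD h phi A m e (Fr (tidx j)) (Fr (tidx l)) z = ricci h j l (tpart z).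
Proof.
rewrite ricD_frame; under eq_bigr do rewrite sum_coframe_lie_conn subr0.
rewrite sum_idx_tidx => [|k|a i]; first last.
- rewrite !dalong_zero => [|w|w]; conn_zero => //.
  by rewrite !big1 ?subrr // => g _; conn_zero.
- rewrite !dalong_zero => [|w|w]; conn_zero => //.
  rewrite [X in _ - (_ + X)]big1 => [|g _]; conn_zero => //.
  by rewrite big1 ?subrr // => g _; case: (idxP g) => *; conn_zero.
rewrite /ricci; apply: eq_bigr => i _.
rewrite (funext (conn_ttt h phi j l i)) (funext (conn_ttt h phi i l i)) !dalong_frame_chiE.
rewrite !(sum_idx_tidx (F := fun g => K _ _ g z * _)) => *; conn_zero => //.
under eq_bigr do rewrite !conn_ttt.
under [X in _ - (_ + X)]eq_bigr do rewrite !conn_ttt.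
by rewrite sumrB opprD addrACA.
Qed.

Lemma ricD_xx j l z : ricD h phi A m e (Fr (xidx j)) (Fr (xidx l)) z = ricci phi j l (xpart z).
Proof.
rewrite ricD_frame; under eq_bigr do rewrite sum_coframe_lie_conn subr0.
rewrite sum_idx_xidx => [|k|a i]; first last.
- rewrite !dalong_zero => [|w|w]; conn_zero => //.
  by rewrite !big1 ?subrr // => g _; conn_zero.
- rewrite !dalong_zero => [|w|w]; conn_zero => //.
  rewrite [X in _ - (_ + X)]big1 => [|g _]; conn_zero => //.
  by rewrite big1 ?subrr // => g _; case: (idxP g) => *; conn_zero.
rewrite /ricci; apply: eq_bigr => i _.
rewrite (funext (conn_xxx h phi j l i)) (funext (conn_xxx h phi i l i)) !dalong_frame_gamE.
rewrite !(sum_idx_xidx (F := fun g => K _ _ g z * _)) => *; conn_zero => //.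
under eq_bigr do rewrite !conn_xxx.
under [X in _ - (_ + X)]eq_bigr do rewrite !conn_xxx.
by rewrite sumrB opprD addrACA.
Qed.

Lemma conn_base be ga al z w : tpart z = tpart w -> xpart z = xpart w ->
  K be ga al z = K be ga al w.
Proof. by rewrite /conn /chiE /gamE => -> ->. Qed.

Lemma ricD_pp a i b j z : ricD h phi A m e (Fr (pidx a i)) (Fr (pidx b j)) z = 0.
Proof.
rewrite ricD_frame; apply: big1 => c _.
rewrite sum_coframe_lie_conn subr0 (dalong_zero _ _ (conn_p h phi a i _ c)).
rewrite !big1 => [|g _|g _]; conn_zero => //.
(* What is left differentiates a connection coefficient along a vertical field. *)
rewrite /dalong derive_cst_along ?addr0 ?subrr // => s.
have [vt vx] : tpart (Fr (pidx a i) z) = 0 /\ xpart (Fr (pidx a i) z) = 0.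
  by split; apply/rowP => q; rewrite mxE frame_pidx /ebasis !mxE; idx_simpl.
by apply: conn_base; rewrite linearP /= ?vt ?vx scaler0 add0r.
Qed.

End FrameRicci.

Section AdaptedBlockMatrices.
Variables (R : comNzRingType) (p n : nat).
Local Notation N := (Ndim p n).

(* The pidx-pidx block is the Kronecker product of U and V. *)
Definition adapted_blockmx (X U : 'M[R]_p) (Y V : 'M[R]_n) : 'M[R]_N :=
  \matrix_(al, be)
   (\sum_a \sum_b X a b * (al == tidx a)%:R * (be == tidx b)%:R
    + \sum_i \sum_j Y i j * (al == xidx i)%:R * (be == xidx j)%:R
    + \sum_a \sum_b \sum_i \sum_j U a b * V i j * (al == pidx a i)%:R * (be == pidx b j)%:R).

Variables (X U : 'M[R]_p) (Y V : 'M[R]_n).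
Local Notation B := (adapted_blockmx X U Y V).

Lemma adapted_blockmx_tt a b : B (tidx a) (tidx b) = X a b.
Proof. by rewrite mxE; drop_vanishing_sums; collapse_at a; collapse_at b; idx_simpl. Qed.

Lemma adapted_blockmx_xx i j : B (xidx i) (xidx j) = Y i j.
Proof. by rewrite mxE; drop_vanishing_sums; collapse_at i; collapse_at j; idx_simpl. Qed.

Lemma adapted_blockmx_pp a i b j : B (pidx a i) (pidx b j) = U a b * V i j.
Proof.
by rewrite mxE; drop_vanishing_sums; collapse_at a; collapse_at b; collapse_at i; collapse_at j;
  idx_simpl.
Qed.

Lemma adapted_blockmx_tx a j : B (tidx a) (xidx j) = 0.
Proof. by rewrite mxE; drop_vanishing_sums. Qed.
Lemma adapted_blockmx_tp a b j : B (tidx a) (pidx b j) = 0.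
Proof. by rewrite mxE; drop_vanishing_sums. Qed.
Lemma adapted_blockmx_xt i b : B (xidx i) (tidx b) = 0.
Proof. by rewrite mxE; drop_vanishing_sums. Qed.
Lemma adapted_blockmx_xp i b j : B (xidx i) (pidx b j) = 0.
Proof. by rewrite mxE; drop_vanishing_sums. Qed.
Lemma adapted_blockmx_pt a i b : B (pidx a i) (tidx b) = 0.
Proof. by rewrite mxE; drop_vanishing_sums. Qed.
Lemma adapted_blockmx_px a i j : B (pidx a i) (xidx j) = 0.
Proof. by rewrite mxE; drop_vanishing_sums. Qed.

End AdaptedBlockMatrices.

Ltac blockmx_simpl :=
  rewrite ?adapted_blockmx_tt ?adapted_blockmx_xx ?adapted_blockmx_pp ?adapted_blockmx_tx
    ?adapted_blockmx_tp ?adapted_blockmx_xt ?adapted_blockmx_xp ?adapted_blockmx_pt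
    ?adapted_blockmx_px ?mul0r ?mulr0.

Section AdaptedBlockAlgebra.
Variables (R : comNzRingType) (p n : nat).
Local Notation N := (Ndim p n).
Local Notation B := (@adapted_blockmx R p n).

Lemma mul_adapted_blockmx (X U X' U' : 'M[R]_p) (Y V Y' V' : 'M[R]_n) :
  B X U Y V *m B X' U' Y' V' = B (X *m X') (U *m U') (Y *m Y') (V *m V').
Proof.
apply/matrixP => al ga; rewrite [LHS]mxE sum_idx.
case: (idxP al) => [a|i|a i]; case: (idxP ga) => [c|k|c k]; blockmx_simpl;
  under eq_bigr do blockmx_simpl; under [X in _ + X + _]eq_bigr do blockmx_simpl;
  under [X in _ + X]eq_bigr do under eq_bigr do blockmx_simpl;
  rewrite ?big1_eq ?addr0 ?add0r ?mxE //.
rewrite big_distrlr; apply: eq_bigr => b _; apply: eq_bigr => j _.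
by rewrite mulrACA.
Qed.

Lemma adapted_blockmx1 : B 1%:M 1%:M 1%:M 1%:M = 1%:M.
Proof.
apply/matrixP => al be; case: (idxP al) => [a|i|a i]; case: (idxP be) => [b|j|b j];
  by blockmx_simpl; rewrite !mxE; idx_simpl; rewrite -?natrM ?mulnb.
Qed.

End AdaptedBlockAlgebra.

Section FrameMetric.
Variables (R : realType) (p n : nat) (h : 'rV[R]_p -> 'M[R]_p) (phi : 'rV[R]_n -> 'M[R]_n)
  (A : 'rV[R]_p -> 'rV[R]_n -> 'M[R]_(p, n)) (m c e : R).
Local Notation N := (Ndim p n).
Local Notation Fr := (frame h phi A m e).
Local Notation k := (4 * m * c).

Definition frame_metric z : 'M[R]_N :=
  \matrix_(al, be) Gmet h phi A m c e z (Fr al z) (Fr be z).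

Lemma frame_metricE z : frame_metric z =
  adapted_blockmx (k^-1 *: h (tpart z)) (k^-1 *: h (tpart z))
    (phi (xpart z)) (invmx (phi (xpart z))).
Proof.
apply/matrixP => al be; rewrite !mxE /Gmet /=; congr (_ + _ + _).
- by apply: eq_bigr => a _; apply: eq_bigr => b _; rewrite !frame_entry_tidx mxE.
- by apply: eq_bigr => i _; apply: eq_bigr => j _; rewrite !frame_entry_xidx.
apply: eq_bigr => a _; apply: eq_bigr => b _; apply: eq_bigr => i _; apply: eq_bigr => j _.
by rewrite !coframe_frame mxE (eq_sym al) (eq_sym be).
Qed.

Lemma invmx_frame_metric z : h (tpart z) \in unitmx -> phi (xpart z) \in unitmx -> k != 0 ->
  invmx (frame_metric z) =
  adapted_blockmx (k *: invmx (h (tpart z))) (k *: invmx (h (tpart z))) (invmx (phi (xpart z)))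
    (phi (xpart z)).
Proof.
move=> hU phiU k0; set Gi := adapted_blockmx _ _ _ _.
have GGi : frame_metric z *m Gi = 1%:M.
  rewrite frame_metricE mul_adapted_blockmx -scalemxAl -scalemxAr scalerA mulVf //.
  by rewrite scale1r !mulmxV // mulVmx // adapted_blockmx1.
by rewrite -(mulKmx (mulmx1_unit GGi).1 Gi) GGi mulmx1.
Qed.

End FrameMetric.

Section ScalarCurvature.
Variables (R : realType) (p n : nat) (h : 'rV[R]_p -> 'M[R]_p) (phi : 'rV[R]_n -> 'M[R]_n)
  (A : 'rV[R]_p -> 'rV[R]_n -> 'M[R]_(p, n)) (m c e : R).
Local Notation N := (Ndim p n).
Local Notation Fr := (frame h phi A m e).
Local Notation Ric al be z := (ricD h phi A m e (Fr al) (Fr be) z).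

Lemma scDE z : scD h phi A m c e z =
  \sum_al \sum_be invmx (frame_metric h phi A m c e z) al be * Ric al be z.
Proof. by []. Qed.

Variables (X U : 'M[R]_p) (Y V : 'M[R]_n) (z : 'rV[R]_N).
Local Notation B := (adapted_blockmx X U Y V).

Lemma sum_blockmx_ricD_tidx a :
  \sum_be B (tidx a) be * Ric (tidx a) be z = \sum_b X a b * ricci h a b (tpart z).
Proof.
rewrite (sum_idx_tidx (F := fun be => B _ be * _)) => [|i|b j]; blockmx_simpl => //.
by apply: eq_bigr => b _; rewrite adapted_blockmx_tt ricD_tt.
Qed.

Lemma sum_blockmx_ricD_xidx i :
  \sum_be B (xidx i) be * Ric (xidx i) be z = \sum_j Y i j * ricci phi i j (xpart z).
Proof.
rewrite (sum_idx_xidx (F := fun be => B _ be * _)) => [|a|b j]; blockmx_simpl => //.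
by apply: eq_bigr => j _; rewrite adapted_blockmx_xx ricD_xx.
Qed.

Lemma sum_blockmx_ricD_pidx a i : \sum_be B (pidx a i) be * Ric (pidx a i) be z = 0.
Proof.
apply: big1 => be _; case: (idxP be) => [b|j|b j]; blockmx_simpl => //.
by rewrite ricD_pp mulr0.
Qed.

End ScalarCurvature.

Theorem mainTheorem4 (R : realType) (p n : nat)
  (h : 'rV[R]_p -> 'M[R]_p) (phi : 'rV[R]_n -> 'M[R]_n)
  (A : 'rV[R]_p -> 'rV[R]_n -> 'M[R]_(p, n)) (m c e : R) :
  (forall a b, smooth (fun t => h t a b)) ->
  (forall t, (h t)^T = h t) ->
  (forall t (v : 'rV[R]_p), v != 0 -> 0 < (v *m h t *m v^T) ord0 ord0) ->
  (forall i j, smooth (fun x => phi x i j)) ->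
  (forall x, (phi x)^T = phi x) ->
  (forall x, phi x \in unitmx) ->
  (forall f r, smooth (fun tx : 'rV[R]_(p + n) => A (lsubmx tx) (rsubmx tx) f r)) ->
  m != 0 -> 0 < c ->
  forall z : 'rV[R]_(Ndim p n),
    scD h phi A m c e z
    = 4 * m * c * scalar_curv h (tpart z) + scalar_curv phi (xpart z).
Proof.
move=> _ _ h_pd _ _ phi_unit _ m0 c_gt0 z.
have k0 : 4 * m * c != 0 by rewrite !mulf_neq0 ?pnatr_eq0 // gt_eqF.
rewrite scDE invmx_frame_metric ?(posdef_unitmx (h_pd _)) // sum_idx.
under eq_bigr do rewrite sum_blockmx_ricD_tidx.
under [X in _ + X + _]eq_bigr do rewrite sum_blockmx_ricD_xidx.
under [X in _ + X]eq_bigr do under eq_bigr do rewrite sum_blockmx_ricD_pidx.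
rewrite !big1_eq addr0 /scalar_curv mulr_sumr; congr (_ + _).
by apply: eq_bigr => a _; rewrite mulr_sumr; apply: eq_bigr => b _; rewrite mxE mulrA.
Qed.
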